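(* Let $n$ and $r$ be positive integers satisfying $\frac{r^2+r}{2}>n\geq r^{3/2}+\frac{r}{2}+1$. Then $$b(\mathrm{S}_{n,r})=\left\lceil\left(3\left(2n+r-\frac{5}{4}\right)+r^2\right)^{1/2}-r-\frac{3}{2}\right\rceil.$$
   Context: $\mathrm{S}_{n,r}$ denotes the symmetric group $\mathrm{S}_n$ acting naturally on the set of $r$-element subsets of $[n]=\{1,\dots,n\}$. For a permutation group $G$ on a set $\Omega$, $b(G)$ is the minimum size of a subset of $\Omega$ whose pointwise stabiliser in $G$ is trivial. *)

From HB Require Import structures.
From mathcomp Require Import all_boot all_order all_algebra all_fingroup.
From mathcomp Require Import reals.
Set Implicit Arguments. Unset Strict Implicit. Unset Printing Implicit Defensive.

(* S_{n,r}: Sym('I_n) acting on r-subsets of 'I_n (= [n]) by g . A = g @: A.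
   A base is a set B of r-subsets whose pointwise stabiliser is trivial. *)
Definition is_base (n r : nat) (B : {set {set 'I_n}}) : bool :=
  [forall A in B, #|A| == r] &&
  [forall g : {perm 'I_n}, [forall A in B, (g @: A) == A] ==> (g == 1%g)].

(* b(S_{n,r}) : minimum size of a base (default #|{set {set 'I_n}}| if none,
   which never happens under the theorem's hypotheses). *)
Definition base_size (n r : nat) : nat :=
  \big[minn/#|{set {set 'I_n}}|]_(B : {set {set 'I_n}} | @is_base n r B) #|B|.

From HB Require Import structures.
From mathcomp Require Import all_boot all_order all_algebra all_fingroup.
From mathcomp Require Import reals.
From mathcomp Require Import zify ring lra.
Import Order.TTheory GRing.Theory Num.Theory.

(* If B is a base of size b, the sets {A in B | i \in A}, i in [n],
   are pairwise distinct: otherwise the transposition of two points with equal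
   sets fixes every block.  At most one of them is empty, at most b are
   singletons and at most 'C(b, 2) are pairs, while their sizes add up to b r;
   this gives 6 n <= b^2 + (2 r + 3) b + 6, and the ceiling in the statement is
   the least b satisfying this inequality.

   For that least b write n = 1 + b + p + t with
   b + 2 p + 3 t = b r, 0 <= p <= 'C(b, 2) and 0 <= t <= 'C(b, 3); this is where
   the hypotheses r^(3/2) + r/2 + 1 <= n < (r^2 + r)/2 are used.  The family of
   the empty set, the singletons, p pairs and t triples of [b] has n members of
   total size b r.  Moving a point of too high degree out of a member, in favour
   of a point of too low degree, keeps the members distinct, so eventually every
   point of [b] lies in exactly r members.  Read dually, each point of [b] gives
   the r-set of members containing it, and these b r-subsets of [n] separate
   all n members: a base of size b. *)

Set Implicit Arguments.
Unset Strict Implicit.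
Unset Printing Implicit Defensive.

Section Degree.
Variable T : finType.
Implicit Types (F : {set {set T}}) (S X : {set T}) (i j k : T).

Definition degree F k : nat := \sum_(X in F) (k \in X).

Definition excess r F : nat := \sum_k (degree F k - r).

Lemma sum_mem_card X : \sum_k (k \in X : nat) = #|X|.
Proof. by rewrite -sum1_card [RHS]big_mkcond. Qed.

Lemma degree_card F k : degree F k = #|[set X in F | k \in X]|.
Proof.
rewrite /degree -sum1_card big_mkcond [RHS]big_mkcond /=.
by apply: eq_bigr => X _; rewrite inE; case: (X \in F); case: (k \in X).
Qed.

Lemma sum_degree F : \sum_k degree F k = \sum_(X in F) #|X|.
Proof. by rewrite exchange_big; apply: eq_bigr => X _; apply: sum_mem_card. Qed.

Lemma degree_split F i j :
  degree F i = #|[set S in F | (i \in S) && (j \notin S)]|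
               + \sum_(X in F) ((i \in X) && (j \in X) : nat).
Proof.
rewrite /degree -sum1_card big_mkcond [in RHS]big_mkcond [X in _ + X]big_mkcond.
rewrite -big_split /=; apply: eq_bigr => X _; rewrite inE.
by case: (X \in F); case: (i \in X); case: (j \in X).
Qed.

Lemma degree_exchange F S S' : S \in F -> S' \notin F -> forall k,
  degree (S' |: (F :\ S)) k + (k \in S) = degree F k + (k \in S').
Proof.
move=> SF S'F k; rewrite /degree big_setU1 /=; last by rewrite !inE negb_and S'F orbT.
rewrite [in RHS](bigD1 S SF) /= (eq_bigl (fun X => (X \in F) && (X != S))); last first.
  by move=> X; rewrite !inE andbC.
by rewrite addnAC [in RHS]addnAC (addnC (k \in S')).
Qed.

(* If [j] has smaller degree than [i], the map [S |-> j |: (S :\ i)] cannot send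
   every [S] containing [i] but not [j] back into [F]: it is injective on those
   [S] and lands among the sets containing [j] but not [i]. *)
Lemma exists_shift F i j : degree F j < degree F i ->
  exists S, [/\ S \in F, i \in S, j \notin S & j |: (S :\ i) \notin F].
Proof.
move=> lt_ji; have ij : i != j by apply: contraTneq lt_ji => ->; rewrite ltnn.
pose shift S := j |: (S :\ i).
pose A := [set S in F | (i \in S) && (j \notin S)].
case: (pickP [pred S in A | shift S \notin F]) => [S /andP[] | shiftA].
  by rewrite inE => /and3P[SF iS jS] S'F; exists S.
have {}shiftA S : S \in A -> shift S \in F.
  by move=> AS; have := shiftA S; rewrite /= AS => /negbFE.
have inj_shift : {in A &, injective shift}.
  move=> S1 S2; rewrite !inE => /and3P[_ i1 j1] /and3P[_ i2 j2] e12.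
  apply/setP => x; have := congr1 (fun Y : {set T} => x \in Y) e12; rewrite !inE.
  case: (eqVneq x i) => [->|_]; first by rewrite i1 i2.
  by case: (eqVneq x j) => [->|_] //=; rewrite (negPf j1) (negPf j2).
have sub_shift : shift @: A \subset [set S in F | (j \in S) && (i \notin S)].
  apply/subsetP => _ /imsetP[S AS ->]; move: (AS) (shiftA S AS).
  rewrite !inE eqxx /= => /and3P[_ iS _] ->.
  by rewrite (negPf ij) eqxx.
have := subset_leq_card sub_shift; rewrite (card_in_imset inj_shift).
rewrite (degree_split F i j) (degree_split F j i) in lt_ji.
rewrite (eq_bigr (fun X => (i \in X) && (j \in X) : nat)) in lt_ji; last first.
  by move=> X _; rewrite andbC.
by rewrite ltn_add2r in lt_ji; rewrite leqNgt lt_ji.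
Qed.

Lemma regular_of_excess0 r F : \sum_(X in F) #|X| = #|T| * r ->
  excess r F = 0 -> forall k, degree F k = r.
Proof.
rewrite -sum_degree => sumF /eqP; rewrite sum_nat_eq0 => /forallP /= le_r.
have /eqP : \sum_k (r - degree F k) = 0.
  rewrite sumnB => [|k _]; last by rewrite -subn_eq0 le_r.
  by rewrite sum_nat_const cardT -cardE sumF subnn.
rewrite sum_nat_eq0 => /forallP /= ge_r k.
by apply/eqP; rewrite eqn_leq -subn_eq0 (le_r k) -subn_eq0 (ge_r k).
Qed.

Lemma deficient_of_excess r F : \sum_(X in F) #|X| = #|T| * r ->
  0 < excess r F -> exists j, degree F j < r.
Proof.
rewrite -sum_degree => sumF pos; apply/existsP; move: pos; apply: contraTT.
rewrite negb_exists => /forallP /= ge_r.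
have : \sum_k degree F k = \sum_(k : T) r + excess r F.
  rewrite /excess -big_split; apply: eq_bigr => k _.
  by symmetry; apply: subnKC; rewrite leqNgt ge_r.
rewrite sumF sum_nat_const cardT -cardE -{1}[_ * r]addn0 => /eqP.
by rewrite eqn_add2l eq_sym lt0n negbK.
Qed.

Lemma excess_shift r F i j : r < degree F i -> degree F j < r ->
  exists F' : {set {set T}}, [/\ #|F'| = #|F|, \sum_(X in F') #|X| = \sum_(X in F) #|X|
              & excess r F' < excess r F].
Proof.
move=> lt_ri lt_jr; have lt_ji := ltn_trans lt_jr lt_ri.
have ij : i != j by apply: contraTneq lt_ji => ->; rewrite ltnn.
have [S [SF iS jS S'F]] := exists_shift lt_ji.
set S' := j |: (S :\ i) in S'F; set F' := S' |: (F :\ S); exists F'.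
have dx k : degree F' k + (k \in S) = degree F k + (k \in S') :=
  degree_exchange SF S'F k.
have iS' : i \notin S' by rewrite !inE eqxx orbF.
have jS' : j \in S' by rewrite !inE eqxx.
have S'E k : k != i -> k != j -> (k \in S') = (k \in S).
  by move=> ki kj; rewrite !inE (negPf kj) ki.
split.
- by rewrite cardsU1 !inE (negPf S'F) andbF (cardsD1 S F) SF.
- have card_S' : #|S'| = #|S|.
    by rewrite cardsU1 (cardsD1 i S) iS !inE (negPf jS) andbF.
  rewrite -!sum_degree; apply: (@addIn #|S|); rewrite -{2}card_S' -!sum_mem_card.
  by rewrite -!big_split; apply: eq_bigr => k _; apply: dx.
rewrite /excess [X in X < _](bigD1 i) // [X in _ < X](bigD1 i) //=.
have := dx i; rewrite iS (negPf iS') addn0 => dx_i.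
have le_rest : \sum_(k | k != i) (degree F' k - r) <= \sum_(k | k != i) (degree F k - r).
  apply: leq_sum => k ki; case: (eqVneq k j) => [->|kj].
    by have := dx j; rewrite (negPf jS) jS' /=; lia.
  by have := dx k; rewrite (S'E k ki kj) => /addIn ->.
lia.
Qed.

Lemma regularize r F : \sum_(X in F) #|X| = #|T| * r ->
  exists2 F' : {set {set T}}, #|F'| = #|F| & forall k, degree F' k = r.
Proof.
have [m] := ubnP (excess r F); elim: m F => // m IH F lt_m sumF.
have [ex0|ex_pos] := posnP (excess r F).
  by exists F => //; apply: regular_of_excess0.
have [i lt_ri] : exists i, r < degree F i.
  move: ex_pos; rewrite lt0n sum_nat_eq0 => /forallPn[i]; rewrite /= subn_eq0 -ltnNge.
  by exists i.
have [j lt_jr] := deficient_of_excess sumF ex_pos.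
have [F' [cardF' sumF' lt_ex]] := excess_shift lt_ri lt_jr.
have [F'' cardF'' regF''] := IH F' (leq_trans lt_ex lt_m) (etrans sumF' sumF).
by exists F''; rewrite // cardF'' cardF'.
Qed.

End Degree.

Lemma base_of_regular_family (T : finType) r (F : {set {set T}}) :
  (forall k, degree F k = r) ->
  exists2 B : {set {set 'I_#|F|}}, is_base r B & #|B| <= #|T|.
Proof.
move=> regF; pose block k := [set i : 'I_#|F| | k \in enum_val i].
have card_block k : #|block k| = r.
  rewrite -(regF k) /degree big_enum_val -sum1_card [LHS]big_mkcond /=.
  by apply: eq_bigr => i _; rewrite inE; case: (k \in _).
exists [set block k | k : T]; last exact: leq_imset_card.
apply/andP; split; first by apply/forall_inP => _ /imsetP[k _ ->]; rewrite card_block.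
apply/forallP => g; apply/implyP => /forall_inP fixg.
apply/eqP/permP => i; rewrite perm1; apply: enum_val_inj; apply/setP => k.
have /eqP gk := fixg (block k) (imset_f _ (isT : k \in T)).
have : (g i \in g @: block k) = (i \in block k) by rewrite mem_imset //; apply: perm_inj.
by rewrite gk !inE.
Qed.

Lemma exists_subset_card (T : finType) (A : {set T}) p : p <= #|A| ->
  exists2 P : {set T}, P \subset A & #|P| = p.
Proof.
move/card_geqP => [s [uniq_s size_s sA]]; exists [set x in s].
  by apply/subsetP => x; rewrite inE => /sA.
by rewrite -size_s -(card_uniqP uniq_s); apply: eq_card => x; rewrite inE.
Qed.

Lemma sum_setU_disjoint (I : finType) (A B : {set I}) (f : I -> nat) :
  [disjoint A & B] -> \sum_(i in A :|: B) f i = \sum_(i in A) f i + \sum_(i in B) f i.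
Proof. by move=> dAB; rewrite -bigU //; apply: eq_bigl => i; rewrite inE. Qed.

Lemma family_of_small_sets (T : finType) p t :
  p <= 'C(#|T|, 2) -> t <= 'C(#|T|, 3) ->
  exists F : {set {set T}},
    #|F| = 1 + #|T| + p + t /\ \sum_(X in F) #|X| = #|T| + 2 * p + 3 * t.
Proof.
pose L k := [set X : {set T} | #|X| == k].
have cardL k : #|L k| = 'C(#|T|, k) by rewrite card_draws.
have sizeL k : {in L k, forall X : {set T}, #|X| = k} by move=> X; rewrite inE => /eqP.
rewrite -!cardL => /exists_subset_card[P sPL cardP] /exists_subset_card[Q sQL cardQ].
have sizeP := sub_in1 (subsetP sPL) (sizeL 2).
have sizeQ := sub_in1 (subsetP sQL) (sizeL 3).
have disj (A B : {set {set T}}) k :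
    {in A, forall X : {set T}, #|X| < k} -> {in B, forall X : {set T}, #|X| = k} ->
    [disjoint A & B].
  move=> ltA eqB; rewrite -setI_eq0; apply/eqP/setP => X; rewrite !inE.
  by apply/negbTE/negP => /andP[/ltA ltX /eqB eqX]; rewrite eqX ltnn in ltX.
have d01 : [disjoint L 0 & L 1] by apply: (disj _ _ 1) => // X /sizeL ->.
have d2 : [disjoint L 0 :|: L 1 & P].
  by apply: (disj _ _ 2) => // X; rewrite in_setU => /orP[] /sizeL ->.
have d3 : [disjoint L 0 :|: L 1 :|: P & Q].
  by apply: (disj _ _ 3) => // X; rewrite !in_setU => /orP[/orP[]/sizeL|/sizeP] ->.
have sum_size (A : {set {set T}}) k : {in A, forall X : {set T}, #|X| = k} ->
    \sum_(X in A) #|X| = k * #|A|.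
  by move=> eqA; rewrite mulnC -sum_nat_const; apply: eq_bigr.
exists (L 0 :|: L 1 :|: P :|: Q); split.
  by rewrite -sum1_card !sum_setU_disjoint // !sum1_card !cardL bin0 bin1 cardP cardQ.
rewrite !sum_setU_disjoint // (sum_size _ 0 (sizeL 0)) (sum_size _ 1 (sizeL 1)).
by rewrite (sum_size _ 2 sizeP) (sum_size _ 3 sizeQ) !cardL bin1 cardP cardQ mul0n mul1n.
Qed.

Lemma exists_base_of_counts n r b p t : p <= 'C(b, 2) -> t <= 'C(b, 3) ->
  1 + b + p + t = n -> b + 2 * p + 3 * t = b * r ->
  exists2 B : {set {set 'I_n}}, is_base r B & #|B| <= b.
Proof.
rewrite -{1 2}(card_ord b) => le_p le_t <- size_sum.
have [F0 [cardF0 sumF0]] := family_of_small_sets le_p le_t.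
have [|F cardF regF] := @regularize _ r F0; first by rewrite sumF0 card_ord.
have [B baseB cardB] := base_of_regular_family regF.
by move: B baseB cardB; rewrite cardF cardF0 card_ord => B; exists B.
Qed.

Lemma card_injective_family (T U : finType) (D : {set U}) (f : T -> {set U}) :
  injective f -> (forall i, f i \subset D) ->
  3 * #|T| <= \sum_i #|f i| + 3 + 2 * #|D| + 'C(#|D|, 2).
Proof.
move=> inj_f subD; pose N k := \sum_i (#|f i| == k : nat).
have few k : N k <= 'C(#|D|, k).
  rewrite /N -cards_draws (eq_bigr (fun i => (i \in [set i | #|f i| == k]) : nat)).
    rewrite sum_mem_card -(card_imset _ inj_f); apply/subset_leq_card/subsetP.
    by move=> _ /imsetP[i + ->]; rewrite !inE subD.
  by move=> i _; rewrite inE.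
have : \sum_(i : T) 3 <= \sum_i #|f i| + 3 * N 0 + 2 * N 1 + N 2.
  rewrite /N !big_distrr -!big_split /=.
  by apply: leq_sum => i _; case: #|f i| => [|[|[|]]].
rewrite sum_nat_const cardT -cardE mulnC.
have := few 0; have := few 1; have := few 2; rewrite bin0 bin1; lia.
Qed.

Lemma base_separates_points n r (B : {set {set 'I_n}}) : is_base r B ->
  injective (fun i => [set A in B | i \in A]).
Proof.
case/andP=> _ /forallP trivial_stab i j eq_ij; apply/eqP; apply: contraT => ij.
have tij_neq1 : tperm i j != 1%g.
  by apply: contraNneq ij => /permP/(_ i); rewrite tpermL perm1 => ->.
have := trivial_stab (tperm i j); rewrite (negPf tij_neq1) implybF => /negP[].
apply/forall_inP => A AB; have eqA : (i \in A) = (j \in A).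
  by have := congr1 (fun S : {set {set 'I_n}} => A \in S) eq_ij; rewrite /= !inE AB.
rewrite eqEcard card_imset ?leqnn ?andbT; last exact: perm_inj.
apply/subsetP => _ /imsetP[x xA ->].
by case: tpermP => [xi|xj|//]; [rewrite -eqA -xi | rewrite eqA -xj].
Qed.

Definition counting_bound n r b := 6 * n <= b ^ 2 + (2 * r + 3) * b + 6.

Lemma base_counting_bound n r (B : {set {set 'I_n}}) : is_base r B ->
  counting_bound n r #|B|.
Proof.
move=> baseB; have subB i : [set A in B | i \in A] \subset B.
  by apply/subsetP => A; rewrite inE => /andP[].
have := card_injective_family (base_separates_points baseB) subB.
have -> : \sum_i #|[set A in B | i \in A]| = #|B| * r.
  rewrite -(eq_bigr _ (fun i _ => degree_card B i)) sum_degree -sum_nat_const.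
  by case/andP: baseB => /forall_inP sizeB _; apply: eq_bigr => A /sizeB/eqP.
rewrite card_ord /counting_bound.
have := mul_bin_diag #|B| 1; rewrite bin1; lia.
Qed.

Lemma base_size_eq n r b (B : {set {set 'I_n}}) : is_base r B -> #|B| <= b ->
  (forall B' : {set {set 'I_n}}, is_base r B' -> b <= #|B'|) -> base_size n r = b.
Proof.
move=> baseB cardB minb; apply/eqP; rewrite eqn_leq /base_size -minEnat.
rewrite (leq_trans _ cardB) /=; last exact: (bigmin_le_cond (T := nat)).
apply/(bigmin_geP (T := nat)); split=> [|B' /minb //]; apply: leq_trans (minb B baseB) _.
exact: leq_trans (max_card _) (leq_card _ (@set1_inj _)).
Qed.

Local Open Scope ring_scope.

Lemma ceil_sqrt_subr (R : archiRcfType) (D a : R) (m : int) :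
  0 <= m%:~R - 1 + a -> (m%:~R - 1 + a) ^+ 2 < D -> D <= (m%:~R + a) ^+ 2 ->
  Num.ceil (Num.sqrt D - a) = m.
Proof.
move=> ge0 lt_D le_D; apply: ceil_def; rewrite intrB ltrBrDr lerBlDr; apply/andP; split.
  rewrite -[X in X < _]ger0_norm // -sqrtr_sqr ltr_sqrt //.
  exact: le_lt_trans (sqr_ge0 _) lt_D.
have : 0 <= m%:~R + a by rewrite (le_trans ge0) // lerD2r gerBl.
by move=> /ger0_norm <-; rewrite -sqrtr_sqr ler_sqrt // sqr_ge0.
Qed.

(* For the least solution b of the counting bound, these give the numbers of
   pairs p = 3 n - 3 - 2 b - b r >= 0 and of triples t = b r + b + 2 - 2 n
   with 6 t <= b (b - 1) (b - 2) used in the upper-bound construction. *)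
Section SqrtBound.
Variable R : realFieldType.
Implicit Types n r s b : R.

Lemma five_lt_r n r s : 0 <= s -> s ^+ 2 = r -> 1 <= r ->
  r * s + r / 2 + 1 <= n -> 2 * n + 2 <= r ^+ 2 + r -> 5 < r.
Proof.
by move=> s_ge0 sqr_s r_ge1 n_ge n_lt; rewrite ltNge; apply/negP => r_le5; nra.
Qed.

Lemma four_lt_b n r s b : 0 <= s -> s ^+ 2 = r -> 6 <= r ->
  r * s + r / 2 + 1 <= n -> 6 * n <= b ^+ 2 + (2 * r + 3) * b + 6 -> 0 <= b -> 4 < b.
Proof.
move=> s_ge0 sqr_s r_ge6 n_ge n_le b_ge0; rewrite ltNge; apply/negP => b_le4.
have s_ge : 12 / 5 <= s by nra.
have h1 : 0 <= (4 - b) * (2 * r + 3) by apply: mulr_ge0; lra.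
have h2 : 0 <= (4 - b) * (4 + b) by apply: mulr_ge0; lra.
have h3 : 0 <= (s - 12 / 5) * r by apply: mulr_ge0; lra.
nra.
Qed.

Lemma pair_count_nonneg n r s b : 0 <= s -> s ^+ 2 = r -> 4 <= r -> 1 <= b -> b <= r ->
  r * s + r / 2 + 1 <= n -> (b - 1) ^+ 2 + (2 * r + 3) * (b - 1) + 6 < 6 * n ->
  b * r + 2 * b + 3 <= 3 * n.
Proof.
move=> s_ge0 sqr_s r_ge4 b_ge1 b_le_r n_ge n_gt.
have [b_le|b_gt] := lerP (b - 1) (2 * s).
  have h1 : 0 <= (2 * s + 1 - b) * (2 * r + 4) by apply: mulr_ge0; lra.
  have h2 : 0 <= (2 * s + 1) * (r - 4) by apply: mulr_ge0; lra.
  nra.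
have h : 0 < (b - 1 - 2 * s) * (b - 1 + 2 * s) by apply: mulr_gt0; lra.
nra.
Qed.

Lemma triple_count_le n r s b : 0 <= s -> s ^+ 2 = r -> 5 <= b ->
  r * s + r / 2 + 1 <= n -> 6 * (b * r + b + 2 - 2 * n) <= b * (b - 1) * (b - 2).
Proof.
move=> s_ge0 sqr_s b_ge5 n_ge.
(* AM-GM: with x = b - 1, (x - 3 s)^2 (x + 6 s) >= 0 reads x^3 >= 27 r (x - 2 s). *)
have h1 : 0 <= (b - 1 - 3 * s) ^+ 2 * (b - 1 + 6 * s).
  by apply: mulr_ge0; [exact: sqr_ge0 | lra].
have e1 : (b - 1 - 3 * s) ^+ 2 * (b - 1 + 6 * s)
          = (b - 1) ^+ 3 - 27 * (s ^+ 2 * (b - 1 - 2 * s)) by ring.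
have h2 : 0 <= (b - 5) * (b - 1) ^+ 2 by apply: mulr_ge0; [lra | exact: sqr_ge0].
have h3 : 6 * (b * r + b + 2 - 2 * n) <= 6 * (s ^+ 2 * (b - 1 - 2 * s)) + 6 * b.
  by rewrite sqr_s; nra.
have e2 : b * (b - 1) * (b - 2) = (b - 1) ^+ 3 - (b - 1) by ring.
nra.
Qed.

End SqrtBound.

Section NatSqrtBound.
Variables (R : realFieldType) (s : R) (n r : nat).
Hypotheses (s_ge0 : 0 <= s) (sqr_s : s ^+ 2 = r%:R).
Hypothesis n_ge : r%:R * s + r%:R / 2 + 1 <= n%:R.

Lemma six_le_r : (2 * n < r * r + r)%N -> (6 <= r)%N.
Proof.
move=> n_lt; have even_rr : ~~ odd (r * r + r) by rewrite addnC -mulnS oddM /= andbN.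
have {}n_lt : (2 * n + 2 <= r * r + r)%N.
  by have := odd_double_half (r * r + r); rewrite (negPf even_rr) -mul2n; lia.
have r_ge1 : 1 <= r%:R :> R by rewrite ler1n; nia.
have {}n_lt : 2 * n%:R + 2 <= r%:R ^+ 2 + r%:R :> R.
  by move: n_lt; rewrite -(ler_nat R) !(natrD, natrM) expr2.
by rewrite -(ltr_nat R) (five_lt_r s_ge0 sqr_s r_ge1 n_ge n_lt).
Qed.

Lemma five_le_counting_bound b : (6 <= r)%N -> counting_bound n r b -> (5 <= b)%N.
Proof.
rewrite /counting_bound -(ler_nat R) -(ler_nat R) !(natrD, natrM, natrX) => r_ge6 bound_b.
by rewrite -(ltr_nat R); apply: (four_lt_b s_ge0 sqr_s r_ge6 n_ge bound_b).
Qed.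

Lemma counts_of_minimal_bound c :
  (6 <= r)%N -> (4 <= c < r)%N -> counting_bound n r c.+1 -> ~~ counting_bound n r c ->
  exists p t, [/\ p <= 'C(c.+1, 2), t <= 'C(c.+1, 3),
                  1 + c.+1 + p + t = n & c.+1 + 2 * p + 3 * t = c.+1 * r]%N.
Proof.
move=> r_ge6 /andP[c_ge4 c_lt_r] bound_b; rewrite -ltnNge => not_bound_c.
have r_geR : 6 <= r%:R :> R by rewrite ler_nat.
have pairs : (c.+1 * r + 2 * c.+1 + 3 <= 3 * n)%N.
  rewrite -(ler_nat R) !(natrD, natrM) -natr1.
  apply: (pair_count_nonneg s_ge0 sqr_s) => //.
  - by apply: le_trans r_geR; rewrite ler_nat.
  - by rewrite lerDr.
  - by rewrite natr1 ler_nat.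
  - by rewrite addrK; move: not_bound_c; rewrite -(ltr_nat R) !(natrD, natrM, natrX).
have triples : (c.+1 * r + c.+1 + 2 <= 2 * n + 'C(c.+1, 3))%N.
  have bin3 : (6 * 'C(c.+1, 3) = c.+1 * c * c.-1)%N.
    by rewrite -[6%N]/(2 * 3)%N -mulnA -mul_bin_diag mulnCA -mul_bin_diag bin1 mulnA.
  rewrite -(leq_pmul2l (isT : (0 < 6)%N)) [leqRHS]mulnDr bin3 -subn1 -(ler_nat R).
  have c_geR : 4 <= c%:R :> R by rewrite ler_nat.
  have := triple_count_le s_ge0 sqr_s (b := c.+1%:R) _ n_ge.
  rewrite !(natrD, natrM) natrB ?(leq_trans _ c_ge4) // -natr1; lra.
have bb_le : (c.+1 * c.+1 <= c.+1 * r)%N by rewrite leq_mul2l c_lt_r orbT.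
have := mul_bin_diag c.+1 1; rewrite bin1 /= => bin2.
move: bound_b; rewrite /counting_bound => bound_b.
exists (3 * n - 3 - 2 * c.+1 - c.+1 * r)%N, (c.+1 * r + c.+1 + 2 - 2 * n)%N; split; nia.
Qed.

End NatSqrtBound.

Lemma ceil_counting_root (R : archiRcfType) n r c :
  counting_bound n r c.+1 -> ~~ counting_bound n r c ->
  Num.ceil (Num.sqrt (3 * (2 * n%:R + r%:R - 5 / 4) + (r%:R : R) ^+ 2) - r%:R - 3 / 2)
  = c.+1%:Z.
Proof.
rewrite /counting_bound -ltnNge -(ler_nat R) -(ltr_nat R) !(natrD, natrM, natrX).
move=> le_b lt_c; rewrite -addrA -opprD; apply: ceil_sqrt_subr.
all: rewrite -!pmulrn -[c.+1%:R]natr1 ?addrK.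
- have := ler0n R c; have := ler0n R r; lra.
- lra.
- by rewrite -natr1 in le_b; lra.
Qed.

Theorem corollary3p4 (R : realType) (n r : nat) :
  (0 < n)%N -> (0 < r)%N ->
  n%:R < ((r%:R : R) ^+ 2 + r%:R) / 2 ->
  (r%:R : R) * Num.sqrt (r%:R) + r%:R / 2 + 1 <= n%:R ->
  (base_size n r)%:Z =
    Num.ceil (Num.sqrt (3 * (2 * n%:R + r%:R - 5 / 4) + (r%:R : R) ^+ 2)
              - r%:R - 3 / 2).
Proof.
move=> _ _ n_lt n_ge; have s_ge0 := sqrtr_ge0 (r%:R : R).
have sqr_s := sqr_sqrtr (ler0n R r).
have n_lt_nat : (2 * n < r * r + r)%N.
  by rewrite -(ltr_nat R) !(natrD, natrM) -expr2; lra.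
have r_ge6 := six_le_r s_ge0 sqr_s n_ge n_lt_nat.
have bound_r : counting_bound n r r by rewrite /counting_bound; nia.
have [b bound_b min_b] := ex_minnP (ex_intro (counting_bound n r) r bound_r).
have [c def_b] : exists c, b = c.+1.
  by exists b.-1; have := five_le_counting_bound s_ge0 sqr_s n_ge r_ge6 bound_b; lia.
subst b; have not_bound_c : ~~ counting_bound n r c by apply/negP => /min_b; rewrite ltnn.
have c_range : (4 <= c < r)%N.
  by rewrite -ltnS (five_le_counting_bound s_ge0 sqr_s n_ge r_ge6 bound_b) min_b.
have [p [t [le_p le_t size_n size_sum]]] :=
  counts_of_minimal_bound s_ge0 sqr_s n_ge r_ge6 c_range bound_b not_bound_c.
have [B baseB cardB] := exists_base_of_counts le_p le_t size_n size_sum.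
rewrite (base_size_eq baseB cardB) => [|B' /base_counting_bound/min_b //].
by rewrite (ceil_counting_root _ bound_b not_bound_c).
Qed.
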